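(* In the setting of the context, the inclusion maps $\Gamma(F_{xz},R_{xz})\hookrightarrow\Gamma(G_1,S_1)$ and $\Gamma(F_{yz},R_{yz})\hookrightarrow\Gamma(G_1,S_1)$ of Cayley graphs are isometric embeddings. Moreover, for all $g_0\in F_{xz}$, $g_1\in F_{yz}$ and $h\in H$, we have $|g_0h|_{S_1}\ge|g_0|_{S_1}$ and $|g_1h|_{S_1}\ge|g_1|_{S_1}$.
   Context: $H$ is a finitely presented group with finite generating set $T$, containing a free subgroup $F$ of rank $p$ with free basis $R=\{d_1,\dots,d_p\}\subset T$ (standing assumption: $\mathrm{Dist}_F^H$ admits an exponentially bounded sequence of palindromic certificates in $F$). $F_x,F_y,F_z$ are free of rank $p$ with bases $R_x=\{x_i\}$, $R_y=\{y_i\}$, $R_z=\{z_i\}$. $G_1=[H\ast_{\langle d_i=x_iy_i^{-1}\rangle}(F_x\times F_y\times F_z)]\times\langle s_1\rangle$, the amalgamation identifying $d_i$ with $x_iy_i^{-1}$. Set $a_i=x_iz_i$, $b_i=y_iz_i$, $R_{xz}=\{a_i\}$, $R_{yz}=\{b_i\}$, $F_{xz}=\langle R_{xz}\rangle$, $F_{yz}=\langle R_{yz}\rangle$ (free of rank $p$), and $S_1=T\cup R_x\cup R_y\cup R_z\cup R_{xz}\cup R_{yz}\cup\{s_1\}$. $|g|_S$ denotes word length with respect to $S$. *)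

(* groups are given by presentations; group
   elements are represented by words, group equality is the congruence
   generated by free cancellation and the relators. *)
From mathcomp Require Import all_boot.
Set Implicit Arguments. Unset Strict Implicit. Unset Printing Implicit Defensive.

(* A word over an alphabet A: letters (a, false) = a, (a, true) = a^{-1}. *)
Definition word (A : Type) := seq (A * bool).

Definition linv {A : Type} (l : A * bool) : A * bool := (l.1, ~~ l.2).
Definition winv {A : Type} (w : word A) : word A := rev (map linv w).
Definition wmap {A B : Type} (f : A -> B) (w : word A) : word B :=
  map (fun l => (f l.1, l.2)) w.
Definition wsubst {A B : Type} (f : A -> word B) (w : word A) : word B :=
  flatten (map (fun l => if l.2 then winv (f l.1) else f l.1) w).

Fixpoint reduced {A : eqType} (w : word A) : bool :=
  match w with
  | x :: ((y :: _) as t) => ~~ ((y.1 == x.1) && (y.2 != x.2)) && reduced t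
  | _ => true
  end.

Inductive weq {A : Type} (Rel : word A -> Prop) : word A -> word A -> Prop :=
| weq_refl w : weq Rel w w
| weq_sym u v : weq Rel u v -> weq Rel v u
| weq_trans u v w : weq Rel u v -> weq Rel v w -> weq Rel u w
| weq_free u v a : weq Rel (u ++ [:: a; linv a] ++ v) (u ++ v)
| weq_rel u v r : Rel r -> weq Rel (u ++ r ++ v) (u ++ v).

Definition comm {A : Type} (a b : A) : word A :=
  [:: (a, false); (b, false); (a, true); (b, true)].

(* Generators of G_1 = [H *_{d_i = x_i y_i^{-1}} (F_x x F_y x F_z)] x <s_1> *)
Inductive gen1 (T : Type) (p : nat) : Type :=
| G1T of T | G1X of 'I_p | G1Y of 'I_p | G1Z of 'I_p | G1S.
Arguments G1S {T p}.

(* Relators of G_1: those of H, the amalgamation d_i = x_i y_i^{-1}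
   (as the relator d_i y_i x_i^{-1}), commutation of the three free factors,
   and centrality of s_1. *)
Inductive rel1 (T : eqType) (p : nat) (relH : seq (word T)) (d : 'I_p -> T)
  : word (gen1 T p) -> Prop :=
| rel1_H r : r \in relH -> rel1 relH d (wmap (@G1T T p) r)
| rel1_amalg i : rel1 relH d [:: (G1T p (d i), false); (G1Y T i, false); (G1X T i, true)]
| rel1_xy i j : rel1 relH d (comm (G1X T i) (G1Y T j))
| rel1_xz i j : rel1 relH d (comm (G1X T i) (G1Z T j))
| rel1_yz i j : rel1 relH d (comm (G1Y T i) (G1Z T j))
| rel1_s g : rel1 relH d (comm G1S g).

Definition G1eq (T : eqType) (p : nat) (relH : seq (word T)) (d : 'I_p -> T) :=
  weq (rel1 relH d).

Definition wa (T : Type) (p : nat) (i : 'I_p) : word (gen1 T p) :=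
  [:: (G1X T i, false); (G1Z T i, false)].
Definition wb (T : Type) (p : nat) (i : 'I_p) : word (gen1 T p) :=
  [:: (G1Y T i, false); (G1Z T i, false)].

(* Letters of S_1 = T u R_x u R_y u R_z u R_xz u R_yz u {s_1} *)
Inductive sgen1 (T : Type) (p : nat) : Type :=
| SG of gen1 T p | SA of 'I_p | SB of 'I_p.

Definition evalS1 (T : Type) (p : nat) (s : sgen1 T p) : word (gen1 T p) :=
  match s with
  | SG g => [:: (g, false)]
  | SA i => wa T i
  | SB i => wb T i
  end.

Definition lenS1_le (T : eqType) (p : nat) (relH : seq (word T)) (d : 'I_p -> T)
  (w : word (gen1 T p)) (n : nat) : Prop :=
  exists s : word (sgen1 T p), size s <= n /\ G1eq relH d (wsubst (@evalS1 T p) s) w.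

Definition lenRxz_le (T : eqType) (p : nat) (relH : seq (word T)) (d : 'I_p -> T)
  (w : word (gen1 T p)) (n : nat) : Prop :=
  exists s : word 'I_p, size s <= n /\ G1eq relH d (wsubst (@wa T p) s) w.

Definition lenRyz_le (T : eqType) (p : nat) (relH : seq (word T)) (d : 'I_p -> T)
  (w : word (gen1 T p)) (n : nat) : Prop :=
  exists s : word 'I_p, size s <= n /\ G1eq relH d (wsubst (@wb T p) s) w.

Definition distS1_le (T : eqType) (p : nat) (relH : seq (word T)) (d : 'I_p -> T)
  (g h : word (gen1 T p)) (n : nat) :=
  @lenS1_le T p relH d (winv g ++ h) n.
Definition distRxz_le (T : eqType) (p : nat) (relH : seq (word T)) (d : 'I_p -> T)
  (g h : word (gen1 T p)) (n : nat) :=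
  @lenRxz_le T p relH d (winv g ++ h) n.
Definition distRyz_le (T : eqType) (p : nat) (relH : seq (word T)) (d : 'I_p -> T)
  (g h : word (gen1 T p)) (n : nat) :=
  @lenRyz_le T p relH d (winv g ++ h) n.

From mathcomp Require Import all_boot.
Set Implicit Arguments. Unset Strict Implicit. Unset Printing Implicit Defensive.

(* The homomorphism G_1 -> F_z that kills H, the x_i, the y_i and s_1 and
   fixes the z_i is well defined (every relator of G_1 maps to a trivial
   word), sends a_i and b_i to z_i, and sends every letter of S_1 to a word
   of length at most 1.  Following it by z_i |-> a_i (resp. b_i) gives a
   retraction of G_1 onto F_xz (resp. F_yz) that kills H and does not
   increase S_1-length measured in R_xz (resp. R_yz); both claims follow. *)

Section WordInverse.
Variable A : Type.

Lemma winv_cat (u v : word A) : winv (u ++ v) = winv v ++ winv u.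
Proof. by rewrite /winv map_cat rev_cat. Qed.

Lemma winv_cons l (w : word A) : winv (l :: w) = winv w ++ [:: linv l].
Proof. by rewrite /winv /= rev_cons cats1. Qed.

Lemma winvK : involutive (@winv A).
Proof.
move=> w; elim: w => [//|[a b] w IH]; rewrite winv_cons winv_cat IH.
by rewrite /winv /linv /= negbK.
Qed.

Lemma size_winv (w : word A) : size (winv w) = size w.
Proof. by rewrite /winv size_rev size_map. Qed.

End WordInverse.

Lemma wsubst_cons (A B : Type) (f : A -> word B) l w :
  wsubst f (l :: w) = (if l.2 then winv (f l.1) else f l.1) ++ wsubst f w.
Proof. by []. Qed.

Lemma wsubst_cat (A B : Type) (f : A -> word B) u v :
  wsubst f (u ++ v) = wsubst f u ++ wsubst f v.
Proof. by rewrite /wsubst map_cat flatten_cat. Qed.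

Lemma wsubst_winv (A B : Type) (f : A -> word B) w :
  wsubst f (winv w) = winv (wsubst f w).
Proof.
elim: w => [//|[a b] w IH].
rewrite winv_cons wsubst_cat IH wsubst_cons winv_cat /linv /= cats0.
by case: b; rewrite ?winvK.
Qed.

Lemma eq_wsubst (A B : Type) (f g : A -> word B) :
  f =1 g -> wsubst f =1 wsubst g.
Proof. by move=> efg; elim=> [//|l w IH]; rewrite !wsubst_cons IH efg. Qed.

Lemma wsubst_comp (A B C : Type) (f : A -> word B) (g : B -> word C) w :
  wsubst g (wsubst f w) = wsubst (fun a => wsubst g (f a)) w.
Proof.
elim: w => [//|[a b] w IH]; rewrite !wsubst_cons wsubst_cat IH /=.
by case: b; rewrite ?wsubst_winv.
Qed.

Lemma wsubst_wmap (A B C : Type) (g : A -> B) (f : B -> word C) w :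
  wsubst f (wmap g w) = wsubst (fun a => f (g a)) w.
Proof. by elim: w => [//|l w IH]; rewrite /wmap /= -/(wmap g w) !wsubst_cons IH. Qed.

Lemma wsubst_nil (A B : Type) (w : word A) : wsubst (fun _ => [::] : word B) w = [::].
Proof. by elim: w => [//|l w IH]; rewrite wsubst_cons IH; case: l.2. Qed.

Lemma wsubst_letter (A : Type) (w : word A) : wsubst (fun a => [:: (a, false)]) w = w.
Proof. by elim: w => [//|[a b] w IH]; rewrite wsubst_cons IH; case: b. Qed.

Lemma size_wsubst_le (A B : Type) (f : A -> word B) w :
  (forall a, size (f a) <= 1) -> size (wsubst f w) <= size w.
Proof.
move=> f_le1; elim: w => [//|l w IH]; rewrite wsubst_cons size_cat.
have fl_le1 : size (if l.2 then winv (f l.1) else f l.1) <= 1.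
  by case: l.2; rewrite ?size_winv f_le1.
exact: leq_add fl_le1 IH.
Qed.

Section PresentedGroups.
Variables (A : Type) (R : word A -> Prop).

Lemma weq_ctx x y u v : weq R u v -> weq R (x ++ u ++ y) (x ++ v ++ y).
Proof.
elim=> {u v} [w | u v _ IH | u v w _ IHuv _ IHvw | u v a | u v r Rr].
- exact: weq_refl.
- exact: weq_sym IH.
- exact: weq_trans IHuv IHvw.
- by have := weq_free R (x ++ u) (v ++ y) a; rewrite !catA.
- by have := weq_rel (x ++ u) (v ++ y) Rr; rewrite !catA.
Qed.

Lemma weq_cat_winv w : weq R (w ++ winv w) [::].
Proof.
elim: w => [|l w IH]; first exact: weq_refl.
rewrite winv_cons /= catA.
apply: (@weq_trans _ _ _ ([:: l] ++ [::] ++ [:: linv l])).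
  by have := weq_ctx [:: l] [:: linv l] IH; rewrite /= -catA.
exact: (weq_free R [::] [::] l).
Qed.

Lemma weq_winv_cat w : weq R (winv w ++ w) [::].
Proof. by have := weq_cat_winv (winv w); rewrite winvK. Qed.

End PresentedGroups.

Lemma weq_wsubst (A B : Type) (R : word A -> Prop) (R' : word B -> Prop)
    (f : A -> word B) :
  (forall r, R r -> weq R' (wsubst f r) [::]) ->
  forall u v, weq R u v -> weq R' (wsubst f u) (wsubst f v).
Proof.
move=> f_rel u v; elim=> {u v} [w | u v _ IH | u v w _ IHuv _ IHvw | u v a | u v r Rr].
- exact: weq_refl.
- exact: weq_sym IH.
- exact: weq_trans IHuv IHvw.
- have f_free : weq R' (wsubst f [:: a; linv a]) [::].
    rewrite /wsubst /= cats0; case: a.2 => /=.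
      exact: weq_winv_cat.
    exact: weq_cat_winv.
  by rewrite !wsubst_cat; have := weq_ctx (wsubst f u) (wsubst f v) f_free.
- by rewrite !wsubst_cat; have := weq_ctx (wsubst f u) (wsubst f v) (f_rel r Rr).
Qed.

Section RetractionOntoFz.
Variables (T : eqType) (p : nat) (relH : seq (word T)) (d : 'I_p -> T).

Definition zproj (g : gen1 T p) : word 'I_p :=
  if g is G1Z i then [:: (i, false)] else [::].

Notation free_eq := (weq (fun _ : word 'I_p => False)).

Lemma zproj_wmap_G1T h : wsubst zproj (wmap (@G1T T p) h) = [::].
Proof. by rewrite wsubst_wmap (@eq_wsubst _ _ _ (fun _ => [::])) // wsubst_nil. Qed.

Lemma zproj_rel1 r : rel1 relH d r -> free_eq (wsubst zproj r) [::].
Proof.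
case=> {r} [r _ | i | i j | i j | i j | g].
- by rewrite zproj_wmap_G1T; apply: weq_refl.
- exact: weq_refl.
- exact: weq_refl.
- exact: (weq_free _ [::] [::] (j, false)).
- exact: (weq_free _ [::] [::] (j, false)).
- by rewrite /comm /wsubst /= cats0; apply: weq_cat_winv.
Qed.

Lemma G1eq_zproj u v : G1eq relH d u v -> free_eq (wsubst zproj u) (wsubst zproj v).
Proof. exact/weq_wsubst/zproj_rel1. Qed.

Lemma G1eq_wsubst (c : 'I_p -> word (gen1 T p)) u v :
  free_eq u v -> G1eq relH d (wsubst c u) (wsubst c v).
Proof. by apply: weq_wsubst => r []. Qed.

Definition zprojS1 (a : sgen1 T p) : word 'I_p := wsubst zproj (evalS1 a).

Lemma size_zprojS1 a : size (zprojS1 a) <= 1.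
Proof. by case: a => [[t|i|i|i|]|i|i]. Qed.

Variables (c : 'I_p -> word (gen1 T p)) (sc : 'I_p -> sgen1 T p).
Hypothesis zproj_c : forall i, wsubst zproj (c i) = [:: (i, false)].
Hypothesis evalS1_sc : forall i, evalS1 (sc i) = c i.

Lemma zproj_wsubstK u : wsubst zproj (wsubst c u) = u.
Proof. by rewrite wsubst_comp (eq_wsubst zproj_c) wsubst_letter. Qed.

Lemma evalS1_wmap s : wsubst (@evalS1 T p) (wmap sc s) = wsubst c s.
Proof. by rewrite wsubst_wmap (eq_wsubst evalS1_sc). Qed.

Lemma lenS1_le_retract u h n :
  lenS1_le relH d (wsubst c u ++ wmap (@G1T T p) h) n ->
  exists s : word 'I_p, size s <= n /\ G1eq relH d (wsubst c s) (wsubst c u).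
Proof.
case=> s [size_s eq_s]; exists (wsubst zprojS1 s); split.
  exact: leq_trans (size_wsubst_le _ size_zprojS1) size_s.
apply: G1eq_wsubst; rewrite /zprojS1 -wsubst_comp.
by have := G1eq_zproj eq_s; rewrite wsubst_cat zproj_wsubstK zproj_wmap_G1T cats0.
Qed.

Lemma lenS1_le_wsubst s w n :
  size s <= n -> G1eq relH d (wsubst c s) w -> lenS1_le relH d w n.
Proof. by move=> size_s eq_s; exists (wmap sc s); rewrite size_map evalS1_wmap. Qed.

Lemma distS1_le_retract u v n :
  distS1_le relH d (wsubst c u) (wsubst c v) n <->
  exists s : word 'I_p, size s <= n /\
    G1eq relH d (wsubst c s) (winv (wsubst c u) ++ wsubst c v).
Proof.
rewrite /distS1_le -wsubst_winv -wsubst_cat; split.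
- by move=> lenS1; apply: (@lenS1_le_retract _ [::]); rewrite cats0.
- by case=> s [size_s eq_s]; apply: lenS1_le_wsubst size_s eq_s.
Qed.

Lemma lenS1_le_cat_H u h n :
  lenS1_le relH d (wsubst c u ++ wmap (@G1T T p) h) n ->
  lenS1_le relH d (wsubst c u) n.
Proof.
by case/lenS1_le_retract=> s [size_s eq_s]; apply: lenS1_le_wsubst size_s eq_s.
Qed.

End RetractionOntoFz.

Theorem lemma3p2
  (T : finType) (relH : seq (word T)) (p : nat) (d : 'I_p -> T)
  (d_inj : injective d)
  (F_free : forall u : word 'I_p, u != [::] -> reduced u ->
              ~ weq (fun r => r \in relH) (wmap d u) [::]) :
  (* Gamma(F_xz, R_xz) -> Gamma(G_1, S_1) is an isometric embedding *)
  (forall (u v : word 'I_p) (n : nat),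
     distS1_le relH d (wsubst (@wa T p) u) (wsubst (@wa T p) v) n <->
     distRxz_le relH d (wsubst (@wa T p) u) (wsubst (@wa T p) v) n) /\
  (* Gamma(F_yz, R_yz) -> Gamma(G_1, S_1) is an isometric embedding *)
  (forall (u v : word 'I_p) (n : nat),
     distS1_le relH d (wsubst (@wb T p) u) (wsubst (@wb T p) v) n <->
     distRyz_le relH d (wsubst (@wb T p) u) (wsubst (@wb T p) v) n) /\
  (* |g_0 h|_{S_1} >= |g_0|_{S_1} for g_0 in F_xz, h in H *)
  (forall (u : word 'I_p) (h : word T) (n : nat),
     lenS1_le relH d (wsubst (@wa T p) u ++ wmap (@G1T T p) h) n ->
     lenS1_le relH d (wsubst (@wa T p) u) n) /\
  (* |g_1 h|_{S_1} >= |g_1|_{S_1} for g_1 in F_yz, h in H *)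
  (forall (u : word 'I_p) (h : word T) (n : nat),
     lenS1_le relH d (wsubst (@wb T p) u ++ wmap (@G1T T p) h) n ->
     lenS1_le relH d (wsubst (@wb T p) u) n).
Proof.
have zproj_a i : wsubst (@zproj T p) (wa T i) = [:: (i, false)] by [].
have zproj_b i : wsubst (@zproj T p) (wb T i) = [:: (i, false)] by [].
have evalS1_a i : evalS1 (@SA T p i) = wa T i by [].
have evalS1_b i : evalS1 (@SB T p i) = wb T i by [].
split; first by move=> u v n; apply: (distS1_le_retract relH d zproj_a evalS1_a).
split; first by move=> u v n; apply: (distS1_le_retract relH d zproj_b evalS1_b).
split; first by move=> u h n; apply: (lenS1_le_cat_H zproj_a evalS1_a).
by move=> u h n; apply: (lenS1_le_cat_H zproj_b evalS1_b).
Qed.
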